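(* Let $G:=|\cdot|$ on $\mathbb{R}$ and $(x^*,q^* )\in\operatorname{graph}\partial G$. Then for every $\gamma>0$, for all $x\in\big[(-1-q^* )/\gamma,\,(1-q^* )/\gamma\big]$ and all $q\in\partial G(x)$, \[ \inf_{\bar x\in(\partial G)^{-1}(q^* )}(q-q^* )(x-\bar x)\ge\gamma\operatorname{dist}^2(x,(\partial G)^{-1}(q^* )), \] i.e. $\partial G$ is $(I,\gamma I)$-strongly submonotone with the set $\mathcal{U}=[(-1-q^* )/\gamma,(1-q^* )/\gamma]$.
   Context: $\partial G$ is the convex subdifferential of the absolute value ($\partial G(x)=\{\operatorname{sign}x\}$ for $x\ne0$, $\partial G(0)=[-1,1]$); $(\partial G)^{-1}(q^* )=\{x:q^*\in\partial G(x)\}$; $\operatorname{dist}(x,A)=\inf_{a\in A}|x-a|$. *)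

From Stdlib Require Import Reals.
From Coquelicot Require Import Coquelicot.
Open Scope R_scope.

Definition G (x : R) : R := Rabs x.

Definition subdiffG (x q : R) : Prop := forall y : R, G y >= G x + q * (y - x).

Definition subdiffG_inv (qs : R) : R -> Prop := fun x => subdiffG x qs.

Definition inf_over (A : R -> Prop) (f : R -> R) : Rbar :=
  Glb_Rbar (fun v => exists a, A a /\ v = f a).

Definition distR (x : R) (A : R -> Prop) : Rbar := inf_over A (fun a => Rabs (x - a)).

(* For the absolute value, [q] is a subgradient at [x] exactly when [|q| <= 1] and
   [q x = |x|].  Hence, for every [xb] with subgradient [qs],
   [(q - qs)(x - xb) = (|x| - qs x) + (|xb| - q xb)], and both brackets are nonnegative.
   On the interval [U] the first one dominates [gamma x^2]: for [x > 0] it equals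
   [(1 - qs) x >= gamma x^2], for [x < 0] it equals [-(1 + qs) x >= gamma x^2].
   Finally [0] has subgradient [qs], so the distance from [x] to the inverse image of
   [qs] is at most [|x|]. *)

From Stdlib Require Import Reals Lra Psatz.
From Coquelicot Require Import Coquelicot.
Open Scope R_scope.

Lemma subdiffG_iff (x q : R) : subdiffG x q <-> -1 <= q <= 1 /\ q * x = Rabs x.
Proof.
  unfold subdiffG, G; split.
  - intros H.
    pose proof (H 0) as H0; pose proof (H (2 * x)) as H2x.
    pose proof (H 1) as H1; pose proof (H (-1)) as Hm1.
    revert H0 H2x H1 Hm1; unfold Rabs; repeat destruct Rcase_abs; intros; nra.
  - intros [Hq Hqx] y; rewrite <- Hqx.
    unfold Rabs; destruct Rcase_abs; nra.
Qed.

Lemma subdiffG_0 (q : R) : -1 <= q <= 1 -> subdiffG 0 q.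
Proof. intros Hq; apply subdiffG_iff; split; [exact Hq | rewrite Rabs_R0; ring]. Qed.

Lemma subdiffG_monotone_gap (x q a qs : R) :
  subdiffG x q -> subdiffG a qs -> Rabs x - qs * x <= (q - qs) * (x - a).
Proof.
  intros [Hq Hqx]%subdiffG_iff [Hqs Hqsa]%subdiffG_iff.
  assert (Hqa : q * a <= Rabs a) by (unfold Rabs; destruct Rcase_abs; nra).
  nra.
Qed.

Lemma scaled_sqr_le_abs_sub_mul (gamma qs x : R) : 0 < gamma ->
  (-1 - qs) / gamma <= x <= (1 - qs) / gamma ->
  gamma * (x * x) <= Rabs x - qs * x.
Proof.
  intros Hg [Hlo Hhi].
  apply (Rmult_le_compat_l gamma) in Hlo, Hhi; try lra.
  field_simplify in Hlo; field_simplify in Hhi; try lra.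
  unfold Rabs; destruct Rcase_abs; nra.
Qed.

Lemma inf_over_le (A : R -> Prop) (f : R -> R) (a : R) :
  A a -> Rbar_le (inf_over A f) (f a).
Proof. intros Ha; apply (proj1 (Glb_Rbar_correct _)); exists a; auto. Qed.

Lemma inf_over_ge (A : R -> Prop) (f : R -> R) (m : R) :
  (forall a, A a -> m <= f a) -> Rbar_le m (inf_over A f).
Proof.
  intros Hm; apply (proj2 (Glb_Rbar_correct _)).
  intros v [a [Ha ->]]; exact (Hm a Ha).
Qed.

Lemma distR_finite_le (x : R) (A : R -> Prop) (a : R) :
  A a -> exists d, distR x A = Finite d /\ 0 <= d <= Rabs (x - a).
Proof.
  intros Ha.
  pose proof (inf_over_le A (fun b => Rabs (x - b)) a Ha) as Hle.
  pose proof (inf_over_ge A (fun b => Rabs (x - b)) 0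
                (fun b _ => Rabs_pos (x - b))) as Hge.
  unfold distR; destruct (inf_over A (fun b => Rabs (x - b))) as [d| |];
    simpl in Hle, Hge; try contradiction.
  exists d; auto.
Qed.

Theorem lemma5p11 (xs qs : R) (Hgraph : subdiffG xs qs) :
  forall gamma : R, 0 < gamma ->
  forall x : R, (-1 - qs) / gamma <= x <= (1 - qs) / gamma ->
  forall q : R, subdiffG x q ->
  Rbar_le (Rbar_mult (Finite gamma)
                     (Rbar_mult (distR x (subdiffG_inv qs)) (distR x (subdiffG_inv qs))))
          (inf_over (subdiffG_inv qs) (fun xb => (q - qs) * (x - xb))).
Proof.
  intros gamma Hg x Hx q Hq.
  assert (Hqs : -1 <= qs <= 1) by (apply subdiffG_iff in Hgraph; tauto).
  destruct (distR_finite_le x (subdiffG_inv qs) 0 (subdiffG_0 qs Hqs))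
    as [d [-> [Hd0 Hdx]]].
  rewrite Rminus_0_r in Hdx.
  assert (Hdd : d * d <= x * x) by (revert Hdx; unfold Rabs; destruct Rcase_abs; nra).
  apply inf_over_ge; intros a Ha.
  pose proof (scaled_sqr_le_abs_sub_mul gamma qs x Hg Hx).
  pose proof (subdiffG_monotone_gap x q a qs Hq Ha).
  nra.
Qed.
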